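(* A forest (undirected) is unary FA-presentable if and only if it can be obtained from a unary FA-presentable directed forest by replacing its edge relation with the symmetric closure of that relation.
   Context: An (undirected) forest is regarded as a structure $(T,\eta)$ with $\eta$ a symmetric irreflexive edge relation whose graph has no cycles; a directed forest is a directed graph obtained from a forest by directing each edge. A structure $(X,\eta)$ is unary FA-presentable if there exist a regular language $L\subseteq a^*$ and a surjection $\phi:L\to X$ such that $\{(u,v)\in L^2:u\phi=v\phi\}$ and $\{(u,v)\in L^2:(u\phi,v\phi)\in\eta\}$ are regular relations (the words $\mathrm{conv}(u,v)$ over $\{a,\$\}^2$, reading $u,v$ in parallel with the shorter padded by $\$$, form regular languages). *)

From mathcomp Require Import all_boot.
Set Implicit Arguments. Unset Strict Implicit. Unset Printing Implicit Defensive.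

Record dfa (Sigma : finType) := Dfa {
  dfa_state : finType;
  dfa_start : dfa_state;
  dfa_accept : pred dfa_state;
  dfa_step : dfa_state -> Sigma -> dfa_state }.

Definition dfa_accepts (Sigma : finType) (A : dfa Sigma) (w : seq Sigma) : bool :=
  @dfa_accept Sigma A (foldl (@dfa_step Sigma A) (@dfa_start Sigma A) w).

Definition regular (Sigma : finType) (P : seq Sigma -> Prop) : Prop :=
  exists A : dfa Sigma, forall w, P w <-> dfa_accepts A w.

(* The one-letter alphabet {a} is [unit]; a^n is [nseq n tt].
   The alphabet {a,$} is [bool] with [true] = a and [false] = $.
   conv u v is the word over {a,$}^2 of length max(|u|,|v|) whose i-th letter
   is (a or $, a or $) according to whether i < |u|, resp. i < |v|. *)
Definition conv (u v : seq unit) : seq (bool * bool) :=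
  mkseq (fun i => (i < size u, i < size v)) (maxn (size u) (size v)).

Definition unary_FA_presentable (X : Type) (eta : X -> X -> Prop) : Prop :=
  exists (L : seq unit -> Prop) (phi : {u : seq unit | L u} -> X),
    regular L /\
    (forall x : X, exists u, phi u = x) /\
    regular (fun w => exists u v : {u : seq unit | L u},
               phi u = phi v /\ w = conv (proj1_sig u) (proj1_sig v)) /\
    regular (fun w => exists u v : {u : seq unit | L u},
               eta (phi u) (phi v) /\ w = conv (proj1_sig u) (proj1_sig v)).

Definition is_cycle (X : Type) (eta : X -> X -> Prop) (k : nat) (f : nat -> X) : Prop :=
  2 < k /\
  (forall i j, i < k -> j < k -> f i = f j -> i = j) /\
  (forall i, i < k -> eta (f i) (f ((i.+1) %% k))).

Definition is_forest (X : Type) (eta : X -> X -> Prop) : Prop :=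
  (forall x y, eta x y -> eta y x) /\
  (forall x, ~ eta x x) /\
  (forall k f, ~ is_cycle eta k f).

Definition sym_closure (X : Type) (delta : X -> X -> Prop) : X -> X -> Prop :=
  fun x y => delta x y \/ delta y x.

(* A directed forest: obtained from a forest by directing each edge, i.e.
   each undirected edge carries exactly one direction (delta is asymmetric)
   and its symmetric closure is a forest. *)
Definition is_directed_forest (X : Type) (delta : X -> X -> Prop) : Prop :=
  (forall x y, delta x y -> ~ delta y x) /\ is_forest (sym_closure delta).

From mathcomp Require Import all_boot zify.
From Stdlib Require Import Classical ProofIrrelevance IndefiniteDescription.
Set Implicit Arguments. Unset Strict Implicit. Unset Printing Implicit Defensive.

(* Regularity of a unary presentation only depends on the lengths of the words, so a
   presentation is a regular set L of lengths with a surjection onto the structure, and a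
   binary relation on lengths is regular when its convolution language is.  Keeping only
   the shortest representative of each element is a regular condition (by a subset
   construction), so every presentation can be made injective.  Directing each edge from
   the endpoint with the shorter representative to the one with the longer then gives a
   regular, asymmetric relation whose symmetric closure is the forest.  Conversely, the
   symmetric closure of a presentable relation is its union with its transpose. *)

Lemma unit_seq_inj (u v : seq unit) : size u = size v -> u = v.
Proof. by elim: u v => [|[] u IH] [|[] v] //= [] /IH ->. Qed.

Lemma nseq_size_unit (u : seq unit) : nseq (size u) tt = u.
Proof. by apply: unit_seq_inj; rewrite size_nseq. Qed.

Lemma foldl_nseq (S A : Type) (f : S -> A -> S) s n x :
  foldl f s (nseq n x) = iter n (fun s => f s x) s.
Proof. by elim: n s => [|n IH] s //=; rewrite IH -iterSr. Qed.

Lemma iter_id (A : Type) n (x : A) : iter n id x = x.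
Proof. by elim: n => //= n ->. Qed.

Lemma iter_pair (A B : Type) (f : A -> A) (g : B -> B) n a b :
  iter n (fun p => (f p.1, g p.2)) (a, b) = (iter n f a, iter n g b).
Proof. by elim: n => //= n ->. Qed.

Lemma sval_inj (A : Type) (P : A -> Prop) (a b : {x | P x}) : sval a = sval b -> a = b.
Proof. by case: a b => [x px] [y py] /= e; subst y; rewrite (proof_irrelevance _ px py). Qed.

Lemma ex_minimal (P : nat -> Prop) : (exists n, P n) -> exists n, P n /\ forall j, j < n -> ~ P j.
Proof.
move=> [n Pn]; elim/ltn_ind: n Pn => n IH Pn.
case: (classic (exists j, j < n /\ P j)) => [[j [ltjn Pj]]|no_smaller]; first exact: IH Pj.
by exists n; split=> // j ltjn Pj; apply: no_smaller; exists j.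
Qed.

Lemma convE u v : conv u v =
  if size v <= size u then nseq (size v) (true, true) ++ nseq (size u - size v) (true, false)
  else nseq (size u) (true, true) ++ nseq (size v - size u) (false, true).
Proof.
rewrite /conv; case: leqP => h; apply: (@eq_from_nth _ (true, true));
  rewrite ?size_mkseq ?size_cat ?size_nseq; try lia;
  move=> i hi; rewrite nth_mkseq // nth_cat size_nseq; case: ifP => hi2;
  rewrite nth_nseq; try (case: ifP => hi3); f_equal; apply/idP/idP; lia.
Qed.

Lemma count_conv_fst u v : count fst (conv u v) = size u.
Proof. rewrite convE; case: leqP => h; rewrite count_cat !count_nseq /=; lia. Qed.

Lemma count_conv_snd u v : count snd (conv u v) = size v.
Proof. rewrite convE; case: leqP => h; rewrite count_cat !count_nseq /=; lia. Qed.

Lemma regular_ext (S : finType) (P Q : seq S -> Prop) :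
  (forall w, P w <-> Q w) -> regular P -> regular Q.
Proof. by move=> PQ [A hA]; exists A => w; rewrite -hA; exact: iff_sym. Qed.

(** * Unary automata *)

Definition unary_regular (P : nat -> Prop) :=
  exists (Q : finType) (q0 : Q) (f : Q -> Q) (acc : pred Q),
    forall n, P n <-> acc (iter n f q0).

(* The state reached after reading [conv a^n a^m]: [fTT], [fTF], [fFT] are the
   transitions on the letters (a,a), (a,$) and ($,a). *)
Definition run2 (Q : Type) (q0 : Q) (fTT fTF fFT : Q -> Q) n m :=
  if m <= n then iter (n - m) fTF (iter m fTT q0) else iter (m - n) fFT (iter n fTT q0).

Definition unary_regular2 (R : nat -> nat -> Prop) :=
  exists (Q : finType) (q0 : Q) (fTT fTF fFT : Q -> Q) (acc : pred Q),
    forall n m, R n m <-> acc (run2 q0 fTT fTF fFT n m).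

Definition conv_lang (R : nat -> nat -> Prop) (w : seq (bool * bool)) : Prop :=
  exists u v : seq unit, R (size u) (size v) /\ w = conv u v.

Lemma regular_nseqE (L : seq unit -> Prop) :
  regular L <-> unary_regular (fun n => L (nseq n tt)).
Proof.
split.
- move=> [A hA]; exists (dfa_state A), (dfa_start A), (fun s => dfa_step s tt), (@dfa_accept _ A).
  by move=> n; rewrite hA /dfa_accepts foldl_nseq.
- move=> [Q [q0 [f [acc h]]]]; exists (@Dfa _ Q q0 acc (fun s _ => f s)) => w.
  by rewrite -(nseq_size_unit w) h /dfa_accepts /= foldl_nseq.
Qed.

Section ConvAutomaton.
Variables (Q : finType) (q0 : Q) (fTT fTF fFT : Q -> Q) (acc : pred Q).

(* The phase records whether the pad symbol $ has appeared yet, and on which tape;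
   [None] is the dead state, reached when the input is not of the form [conv u v]. *)
Definition conv_step (s : option (Q * option bool)) (x : bool * bool) :=
  match s with None => None | Some (q, ph) =>
    match x.1, x.2, ph with
    | true, true, None => Some (fTT q, None)
    | true, false, None | true, false, Some true => Some (fTF q, Some true)
    | false, true, None | false, true, Some false => Some (fFT q, Some false)
    | _, _, _ => None end end.

Lemma foldl_conv_step_dead w : foldl conv_step None w = None.
Proof. by elim: w. Qed.

Lemma foldl_conv_step_padded2 w q r : foldl conv_step (Some (q, Some true)) w = Some r ->
  exists k, w = nseq k (true, false) /\ r = (iter k fTF q, Some true).
Proof.
elim: w q => [|[[] []] w IH] q /=; rewrite ?foldl_conv_step_dead //.
- by move=> [<-]; exists 0.
- by move/IH => [k [-> ->]]; exists k.+1; rewrite iterSr.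
Qed.

Lemma foldl_conv_step_padded1 w q r : foldl conv_step (Some (q, Some false)) w = Some r ->
  exists k, w = nseq k (false, true) /\ r = (iter k fFT q, Some false).
Proof.
elim: w q => [|[[] []] w IH] q /=; rewrite ?foldl_conv_step_dead //.
- by move=> [<-]; exists 0.
- by move/IH => [k [-> ->]]; exists k.+1; rewrite iterSr.
Qed.

Lemma foldl_conv_step_alive w q r : foldl conv_step (Some (q, None)) w = Some r ->
  exists a b,
    (w = nseq a (true, true) ++ nseq b (true, false) /\ r.1 = iter b fTF (iter a fTT q)) \/
    (w = nseq a (true, true) ++ nseq b (false, true) /\ r.1 = iter b fFT (iter a fTT q)).
Proof.
elim: w q => [|[[] []] w IH] q /=; rewrite ?foldl_conv_step_dead //.
- by move=> [<-]; exists 0, 0; left.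
- by move/IH => [a [b [[-> ->]|[-> ->]]]]; exists a.+1, b; rewrite iterSr; [left|right].
- by move/foldl_conv_step_padded2 => [k [-> ->]]; exists 0, k.+1; left; rewrite iterSr.
- by move/foldl_conv_step_padded1 => [k [-> ->]]; exists 0, k.+1; right; rewrite iterSr.
Qed.

Lemma foldl_conv_step_TT a q :
  foldl conv_step (Some (q, None)) (nseq a (true, true)) = Some (iter a fTT q, None).
Proof. by elim: a q => [|a IH] q //=; rewrite IH -iterSr iterS. Qed.

Lemma foldl_conv_step_TF b q ph : ph != Some false ->
  exists ph', foldl conv_step (Some (q, ph)) (nseq b (true, false)) = Some (iter b fTF q, ph').
Proof.
elim: b q ph => [|b IH] q ph hph /=; first by exists ph.
case: ph hph => [[]|] // _ /=; have [ph' ->] := IH (fTF q) (Some true) isT;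
  by rewrite -iterSr iterS; exists ph'.
Qed.

Lemma foldl_conv_step_FT b q ph : ph != Some true ->
  exists ph', foldl conv_step (Some (q, ph)) (nseq b (false, true)) = Some (iter b fFT q, ph').
Proof.
elim: b q ph => [|b IH] q ph hph /=; first by exists ph.
case: ph hph => [[]|] // _ /=; have [ph' ->] := IH (fFT q) (Some false) isT;
  by rewrite -iterSr iterS; exists ph'.
Qed.

Definition conv_dfa := @Dfa _ (option (Q * option bool) : finType) (Some (q0, None))
  (fun s => if s is Some (q, _) then acc q else false) conv_step.

Lemma foldl_conv_step_conv u v : exists ph,
  foldl conv_step (Some (q0, None)) (conv u v) = Some (run2 q0 fTT fTF fFT (size u) (size v), ph).
Proof.
rewrite convE /run2; case: leqP => h; rewrite foldl_cat foldl_conv_step_TT.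
- exact: foldl_conv_step_TF.
- exact: foldl_conv_step_FT.
Qed.

Lemma conv_dfa_accepts w : dfa_accepts conv_dfa w ->
  exists u v, acc (run2 q0 fTT fTF fFT (size u) (size v)) /\ w = conv u v.
Proof.
rewrite /dfa_accepts /=; case e: foldl => [[q ph]|] // hacc.
have [a [b [[-> /= eq]|[-> /= eq]]]] := foldl_conv_step_alive e; subst q.
- exists (nseq (a + b) tt), (nseq a tt).
  by rewrite convE !size_nseq /run2 leq_addr addKn.
- clear e; case: b hacc => [|b] hacc.
    by exists (nseq a tt), (nseq a tt); rewrite convE !size_nseq /run2 leqnn subnn.
  exists (nseq a tt), (nseq (a + b.+1) tt).
  have lt_a : (a + b.+1 <= a) = false by apply/negbTE; rewrite -ltnNge; lia.
  by rewrite convE !size_nseq /run2 lt_a addKn.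
Qed.

End ConvAutomaton.

Lemma regular_conv_langE R : regular (conv_lang R) <-> unary_regular2 R.
Proof.
split.
- move=> [A hA]; pose step x s := @dfa_step _ A s x.
  exists (dfa_state A), (dfa_start A), (step (true, true)), (step (true, false)),
    (step (false, true)), (@dfa_accept _ A) => n m.
  set u := nseq n tt; set v := nseq m tt.
  have -> : run2 (dfa_start A) (step (true, true)) (step (true, false)) (step (false, true)) n m
      = foldl (@dfa_step _ A) (dfa_start A) (conv u v).
    by rewrite convE /u /v !size_nseq /run2; case: leqP => _; rewrite foldl_cat !foldl_nseq.
  rewrite -/(dfa_accepts A _) -hA; split.
  + by move=> hR; exists u, v; rewrite !size_nseq.
  + move=> [u' [v' [hR e]]].
    have := count_conv_fst u v; have := count_conv_snd u v.
    by rewrite e count_conv_fst count_conv_snd /u /v !size_nseq => <- <-.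
- move=> [Q [q0 [fTT [fTF [fFT [acc h]]]]]]; exists (conv_dfa q0 fTT fTF fFT acc) => w; split.
  + move=> [u [v [hR ->]]]; rewrite /dfa_accepts /=.
    by have [ph ->] := foldl_conv_step_conv q0 fTT fTF fFT u v; apply/h.
  + by move/conv_dfa_accepts => [u [v [/h hR ->]]]; exists u, v.
Qed.

Lemma unary_regular_ext P S : unary_regular P -> (forall n, P n <-> S n) -> unary_regular S.
Proof.
move=> [Q [q0 [f [acc h]]]] PS; exists Q, q0, f, acc => n.
exact: iff_trans (iff_sym (PS n)) (h n).
Qed.

Lemma unary_regular2_ext R S :
  unary_regular2 R -> (forall n m, R n m <-> S n m) -> unary_regular2 S.
Proof.
move=> [Q [q0 [a [b [c [acc h]]]]]] RS; exists Q, q0, a, b, c, acc => n m.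
exact: iff_trans (iff_sym (RS n m)) (h n m).
Qed.

Lemma unary_regular_and P S :
  unary_regular P -> unary_regular S -> unary_regular (fun n => P n /\ S n).
Proof.
move=> [Q [q0 [a [acc h]]]] [Q' [q0' [a' [acc' h']]]].
exists (Q * Q')%type, (q0, q0'), (fun p => (a p.1, a' p.2)), (fun p => acc p.1 && acc' p.2).
by move=> n; rewrite iter_pair /= h h'; split; [case=> -> -> | case/andP].
Qed.

Lemma run2_pair (A B : Type) (a0 : A) (b0 : B) fTT fTF fFT gTT gTF gFT n m :
  run2 (a0, b0) (fun p => (fTT p.1, gTT p.2)) (fun p => (fTF p.1, gTF p.2))
    (fun p => (fFT p.1, gFT p.2)) n m =
  (run2 a0 fTT fTF fFT n m, run2 b0 gTT gTF gFT n m).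
Proof. by rewrite /run2; case: ifP => _; rewrite !iter_pair. Qed.

Section ProductAutomaton.
Variables (R S : nat -> nat -> Prop) (op : bool -> bool -> bool).
Hypotheses (regR : unary_regular2 R) (regS : unary_regular2 S).

Lemma unary_regular2_prod (RS : nat -> nat -> Prop) :
  (forall n m (r s : bool), (R n m <-> r) -> (S n m <-> s) -> (RS n m <-> op r s)) ->
  unary_regular2 RS.
Proof.
move: regR regS => [Q [q0 [a [b [c [acc h]]]]]] [Q' [q0' [a' [b' [c' [acc' h']]]]]] hRS.
exists (Q * Q')%type, (q0, q0'), (fun p => (a p.1, a' p.2)), (fun p => (b p.1, b' p.2)),
  (fun p => (c p.1, c' p.2)), (fun p => op (acc p.1) (acc' p.2)) => n m.
by rewrite run2_pair; apply: hRS.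
Qed.

End ProductAutomaton.

Lemma unary_regular2_and R S :
  unary_regular2 R -> unary_regular2 S -> unary_regular2 (fun n m => R n m /\ S n m).
Proof.
move=> regR regS; apply: (@unary_regular2_prod _ _ andb regR regS) => n m r s -> ->.
by split; [case=> -> -> | case/andP].
Qed.

Lemma unary_regular2_or R S :
  unary_regular2 R -> unary_regular2 S -> unary_regular2 (fun n m => R n m \/ S n m).
Proof.
move=> regR regS; apply: (@unary_regular2_prod _ _ orb regR regS) => n m r s -> ->.
by split; [case=> ->; rewrite ?orbT | case/orP; auto].
Qed.

Lemma unary_regular2_transpose R : unary_regular2 R -> unary_regular2 (fun n m => R m n).
Proof.
move=> [Q [q0 [a [b [c [acc h]]]]]]; exists Q, q0, a, c, b, acc => n m.
rewrite h /run2; case: (leqP n m) => h1; case: (leqP m n) => h2 //; try lia.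
have -> : n = m by lia.
by rewrite subnn.
Qed.

Lemma unary_regular2_fst P : unary_regular P -> unary_regular2 (fun n _ => P n).
Proof.
move=> [Q [q0 [f [acc h]]]]; exists Q, q0, f, f, id, acc => n m.
rewrite h /run2; case: leqP => [le_mn|_]; last by rewrite iter_id.
by rewrite -iterD subnK.
Qed.

Lemma unary_regular2_snd P : unary_regular P -> unary_regular2 (fun _ m => P m).
Proof. by move/unary_regular2_fst/unary_regular2_transpose. Qed.

Lemma unary_regular2_lt : unary_regular2 (fun n m => n < m).
Proof.
exists (bool : finType), false, id, (fun _ => false), (fun _ => true), id => n m.
rewrite /run2; case: leqP => h /=; first by rewrite iter_id; case: (n - m); split=> //; lia.
by case e: (m - n) => [|k]; [lia | split].
Qed.

Lemma unary_regular2_eq : unary_regular2 (fun n m => n = m).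
Proof.
exists (bool : finType), false, id, (fun _ => true), (fun _ => true), negb => n m.
rewrite /run2; case: leqP => h /=; rewrite iter_id.
- by case e: (n - m) => [|k] /=; split=> //; lia.
- by case e: (m - n) => [|k] /=; split=> //; lia.
Qed.

Section NoSmallerWitness.
Variables (Q : finType) (q0 : Q) (fTT fTF : Q -> Q).

(* After reading a^n the subset automaton knows [iter n fTT q0] and the set of all states
   [run2 .. n j] with [j < n]; reading one more a advances each of them by [fTF]. *)
Definition subset_step (p : Q * {set Q}) : Q * {set Q} :=
  (fTT p.1, [set s | (s == fTF p.1) || [exists s0 in p.2, s == fTF s0]]).

Lemma iter_subset_step n :
  (iter n subset_step (q0, set0)).1 = iter n fTT q0 /\
  forall s, s \in (iter n subset_step (q0, set0)).2 <->
    exists2 j, j < n & s = iter (n - j) fTF (iter j fTT q0).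
Proof.
elim: n => [|n [IH1 IH2]] /=; first by split=> // s; rewrite inE; split=> // [[]].
split=> [|s]; first by rewrite IH1.
rewrite inE IH1; split.
- case/orP => [/eqP ->|/existsP [s0 /andP [/IH2 [j ltjn ->] /eqP ->]]].
    by exists n; rewrite ?subSnn.
  by exists j; rewrite ?subSn // ltnW.
- move=> [j ltjSn ->]; case: (ltnP j n) => ltjn.
  + apply/orP; right; apply/existsP; exists (iter (n - j) fTF (iter j fTT q0)).
    by rewrite subSn ?(ltnW ltjn) // eqxx andbT; apply/IH2; exists j.
  + have -> : j = n by lia.
    by rewrite subSnn eqxx.
Qed.

End NoSmallerWitness.

Lemma unary_regular_no_smaller R :
  unary_regular2 R -> unary_regular (fun n => forall j, j < n -> ~ R n j).
Proof.
move=> [Q [q0 [fTT [fTF [fFT [acc h]]]]]].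
exists (Q * {set Q})%type, (q0, set0), (subset_step fTT fTF),
  (fun p : Q * {set Q} => [forall s in p.2, ~~ acc s]) => n.
have [_ reach] := iter_subset_step q0 fTT fTF n; split.
- move=> noR; apply/forallP => s; apply/implyP => /reach [j ltjn ->].
  by apply/negP => accj; apply: (noR j ltjn); apply/h; rewrite /run2 ltnW.
- move=> /forallP all_rej j ltjn /h; rewrite /run2 ltnW //.
  by apply/negP/(implyP (all_rej _)); apply/reach; exists j.
Qed.

(** * Presentations indexed by lengths *)

Section UnaryPresentation.
Variable T : Type.

Definition lift_rel (L : nat -> Prop) (phi : {n | L n} -> T) (P : T -> T -> Prop) n m :=
  exists a b : {n | L n}, sval a = n /\ sval b = m /\ P (phi a) (phi b).

Definition unary_presentation (P : T -> T -> Prop) (L : nat -> Prop) (phi : {n | L n} -> T) :=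
  [/\ unary_regular L, forall x, exists a, phi a = x,
      unary_regular2 (lift_rel phi eq) & unary_regular2 (lift_rel phi P)].

Definition pres_lang (L : seq unit -> Prop) (phi : {u | L u} -> T) (P : T -> T -> Prop) w :=
  exists u v : {u | L u}, P (phi u) (phi v) /\ w = conv (sval u) (sval v).

Section FromWords.
Variables (L : seq unit -> Prop) (phi : {u | L u} -> T).

Definition phi_nseq (a : {n | L (nseq n tt)}) : T := phi (exist L _ (svalP a)).

Lemma phi_nseq_size (u : {u | L u}) :
  exists a : {n | L (nseq n tt)}, sval a = size (sval u) /\ phi_nseq a = phi u.
Proof.
have Lu : L (nseq (size (sval u)) tt) by rewrite nseq_size_unit; exact: svalP u.
by exists (exist (fun n => L (nseq n tt)) _ Lu); split=> //; congr phi; apply: sval_inj; rewrite /= nseq_size_unit.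
Qed.

Lemma pres_lang_nseqE P w : pres_lang phi P w <-> conv_lang (lift_rel phi_nseq P) w.
Proof.
split.
- move=> [u [v [Puv ->]]]; exists (sval u), (sval v); split=> //.
  have [a [ea ua]] := phi_nseq_size u; have [b [eb vb]] := phi_nseq_size v.
  by exists a, b; rewrite ua vb.
- move=> [u [v [[a [b [ea [eb Pab]]]] ->]]].
  exists (exist L _ (svalP a)), (exist L _ (svalP b)); split=> //=.
  by rewrite ea eb !nseq_size_unit.
Qed.

End FromWords.

Section FromLengths.
Variables (L : nat -> Prop) (phi : {n | L n} -> T).

Definition phi_size (u : {u : seq unit | L (size u)}) : T := phi (exist L _ (svalP u)).

Lemma pres_lang_sizeE P w : pres_lang phi_size P w <-> conv_lang (lift_rel phi P) w.
Proof.
split.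
- move=> [u [v [Puv ->]]]; exists (sval u), (sval v); split=> //.
  by exists (exist L _ (svalP u)), (exist L _ (svalP v)).
- move=> [u [v [[a [b [ea [eb Pab]]]] ->]]].
  have Lu : L (size u) by rewrite -ea; exact: svalP a.
  have Lv : L (size v) by rewrite -eb; exact: svalP b.
  exists (exist _ u Lu), (exist _ v Lv); split=> //.
  have -> : phi_size (exist _ u Lu) = phi a by congr phi; apply: sval_inj.
  by have -> : phi_size (exist _ v Lv) = phi b by congr phi; apply: sval_inj.
Qed.

End FromLengths.

Lemma unary_FA_presentableE (P : T -> T -> Prop) :
  unary_FA_presentable P <-> exists L (phi : {n | L n} -> T), unary_presentation P phi.
Proof.
split.
- move=> [L [phi [regL [phi_surj [regE regP]]]]].
  exists (fun n => L (nseq n tt)), (phi_nseq phi); split.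
  + exact/regular_nseqE.
  + by move=> x; have [u <-] := phi_surj x; have [a [_ <-]] := phi_nseq_size phi u; exists a.
  + by apply/regular_conv_langE; apply: regular_ext regE => w; exact: pres_lang_nseqE.
  + by apply/regular_conv_langE; apply: regular_ext regP => w; exact: pres_lang_nseqE.
- move=> [L [phi [regL phi_surj regE regP]]].
  exists (fun u => L (size u)), (phi_size phi); split; [|split; [|split]].
  + by apply/regular_nseqE; apply: (unary_regular_ext regL) => n /=; rewrite size_nseq.
  + move=> x; have [a <-] := phi_surj x.
    have La : L (size (nseq (sval a) tt)) by rewrite size_nseq; exact: svalP a.
    by exists (exist (fun u => L (size u)) _ La); congr phi; apply: sval_inj; rewrite /= size_nseq.
  + apply: (regular_ext (fun w => iff_sym (pres_lang_sizeE phi eq w))).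
    exact/regular_conv_langE.
  + apply: (regular_ext (fun w => iff_sym (pres_lang_sizeE phi P w))).
    exact/regular_conv_langE.
Qed.

End UnaryPresentation.

Section Restriction.
Variables (T : Type) (L L' : nat -> Prop) (sub : forall n, L' n -> L n) (phi : {n | L n} -> T).

Definition restrict_index (a : {n | L' n}) : T := phi (exist L _ (sub (svalP a))).

Lemma lift_rel_restrict P n m :
  lift_rel restrict_index P n m <-> [/\ L' n, L' m & lift_rel phi P n m].
Proof.
split.
- move=> [a [b [<- [<- Pab]]]]; split; [exact: svalP a | exact: svalP b |].
  by exists (exist L _ (sub (svalP a))), (exist L _ (sub (svalP b))).
- move=> [L'n L'm [a [b [ea [eb Pab]]]]].
  exists (exist _ n L'n), (exist _ m L'm); do 2!split=> //.
  have -> : restrict_index (exist _ n L'n) = phi a by congr phi; apply: sval_inj.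
  by have -> : restrict_index (exist _ m L'm) = phi b by congr phi; apply: sval_inj.
Qed.

End Restriction.

Lemma lift_rel_eq_inj (T : Type) (L : nat -> Prop) (phi : {n | L n} -> T) n m :
  injective phi -> lift_rel phi eq n m <-> L n /\ n = m.
Proof.
move=> phi_inj; split.
- by move=> [a [b [<- [<- /phi_inj ->]]]]; split; first exact: svalP b.
- by move=> [Ln <-]; exists (exist _ n Ln), (exist _ n Ln).
Qed.

(* Keep, for every element, only its shortest representative. *)
Lemma unary_presentation_injective (T : Type) (P : T -> T -> Prop) (L : nat -> Prop)
    (phi : {n | L n} -> T) :
  unary_presentation P phi ->
  exists L' (phi' : {n | L' n} -> T), unary_presentation P phi' /\ injective phi'.
Proof.
move=> [regL phi_surj regE regP].
pose L' n := L n /\ forall j, j < n -> ~ lift_rel phi eq n j.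
have sub n : L' n -> L n by case.
pose phi' := restrict_index sub phi.
have regL' : unary_regular L' := unary_regular_and regL (unary_regular_no_smaller regE).
have phi'_inj : injective phi'.
  move=> a b eab; apply: sval_inj.
  have shorter (c d : {n | L' n}) : phi' c = phi' d -> ~ sval d < sval c.
    move=> ecd /(svalP c).2; apply; exists (exist L _ (sub _ (svalP c))).
    by exists (exist L _ (sub _ (svalP d))).
  by case: (ltngtP (sval a) (sval b)) => // [/(shorter _ _ (esym eab))|/(shorter _ _ eab)].
exists L', phi'; split=> //; split=> //.
- move=> x; have [a0 <-] := phi_surj x.
  have [n [[c [ec xc]] min_n]] :
      exists n, (exists c : {n | L n}, sval c = n /\ phi c = phi a0) /\
        forall j, j < n -> ~ exists c : {n | L n}, sval c = j /\ phi c = phi a0.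
    by apply: ex_minimal; exists (sval a0), a0.
  have L'n : L' n.
    split; first by rewrite -ec; exact: svalP c.
    move=> j ltjn [a [b [ea [eb eab]]]]; apply: (min_n j ltjn); exists b; split=> //.
    by rewrite -eab -xc; congr phi; apply: sval_inj; rewrite ea ec.
  by exists (exist _ n L'n); rewrite -xc; congr phi; apply: sval_inj.
- apply: (unary_regular2_ext (unary_regular2_and (unary_regular2_fst regL') unary_regular2_eq)).
  by move=> n m; rewrite lift_rel_eq_inj.
- apply: (unary_regular2_ext (unary_regular2_and (unary_regular2_and
    (unary_regular2_fst regL') (unary_regular2_snd regL')) regP)).
  by move=> n m; rewrite lift_rel_restrict; split=> [[[]]|[]].
Qed.

(** * Orienting a forest *)

Section Orientation.
Variables (T : Type) (eta : T -> T -> Prop) (rank : T -> nat).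

Definition orient_by_rank (x y : T) : Prop := eta x y /\ rank x < rank y.

Lemma is_forest_ext (R : T -> T -> Prop) :
  (forall x y, eta x y <-> R x y) -> is_forest eta -> is_forest R.
Proof.
move=> eR [eta_sym [eta_irr eta_acyc]]; split; [|split].
- by move=> x y /eR /eta_sym /eR.
- by move=> x /eR /eta_irr.
- move=> k f [lt2k [f_inj f_adj]]; apply: (eta_acyc k f); do 2!split=> //.
  by move=> i /f_adj /eR.
Qed.

Hypothesis rank_inj : injective rank.

Lemma sym_closure_orient_by_rank :
  is_forest eta -> forall x y, eta x y <-> sym_closure orient_by_rank x y.
Proof.
move=> [eta_sym [eta_irr _]] x y; split=> [exy|[[]|[]]] //; last by move=> /eta_sym.
case: (ltngtP (rank x) (rank y)) => [lt|gt|/rank_inj exy'].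
- by left.
- by right; split=> //; apply: eta_sym.
- by case: (eta_irr x); rewrite {2}exy'.
Qed.

Lemma is_directed_forest_orient_by_rank :
  is_forest eta -> is_directed_forest orient_by_rank.
Proof.
move=> forest_eta; split; first by move=> x y [_ ltxy] [_]; rewrite ltnNge ltnW.
exact: is_forest_ext (sym_closure_orient_by_rank forest_eta) forest_eta.
Qed.

End Orientation.

Lemma lift_rel_orient_by_rank (T : Type) (eta : T -> T -> Prop) (L : nat -> Prop)
    (phi : {n | L n} -> T) (rank : T -> nat) n m :
  (forall a, rank (phi a) = sval a) ->
  lift_rel phi (orient_by_rank eta rank) n m <-> lift_rel phi eta n m /\ n < m.
Proof.
move=> rank_phi; split.
- by move=> [a [b [<- [<- [eab]]]]]; rewrite !rank_phi; split=> //; exists a, b.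
- by move=> [[a [b [<- [<- eab]]]] ltab]; exists a, b; rewrite /orient_by_rank !rank_phi.
Qed.

Lemma lift_rel_sym_closure (T : Type) (delta : T -> T -> Prop) (L : nat -> Prop)
    (phi : {n | L n} -> T) n m :
  lift_rel phi (sym_closure delta) n m <-> lift_rel phi delta n m \/ lift_rel phi delta m n.
Proof.
split.
- by move=> [a [b [ea [eb [dab|dba]]]]]; [left; exists a, b | right; exists b, a].
- by case=> [[a [b [ea [eb dab]]]]|[a [b [ea [eb dab]]]]];
    [exists a, b | exists b, a]; do 2!split=> //; [left|right].
Qed.

Lemma unary_FA_presentable_orient (T : Type) (eta : T -> T -> Prop) :
  is_forest eta -> unary_FA_presentable eta ->
  exists delta, [/\ is_directed_forest delta, unary_FA_presentable delta &
                    forall x y, eta x y <-> sym_closure delta x y].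
Proof.
move=> forest_eta /unary_FA_presentableE [L0 [phi0 /unary_presentation_injective]].
move=> [L [phi [[regL phi_surj regE regEta] phi_inj]]].
pose rank x := sval (proj1_sig (constructive_indefinite_description _ (phi_surj x))).
have rank_phi a : rank (phi a) = sval a.
  by rewrite /rank; case: constructive_indefinite_description => b /= /phi_inj ->.
have rank_inj : injective rank.
  move=> x y; case: (phi_surj x) => a <-; case: (phi_surj y) => b <-.
  by rewrite !rank_phi => /sval_inj ->.
exists (orient_by_rank eta rank); split.
- exact: is_directed_forest_orient_by_rank.
- apply/unary_FA_presentableE; exists L, phi; split=> //.
  apply: (unary_regular2_ext (unary_regular2_and regEta unary_regular2_lt)) => n m.
  by rewrite lift_rel_orient_by_rank.
- exact: sym_closure_orient_by_rank.
Qed.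

Lemma unary_FA_presentable_sym_closure (T : Type) (delta : T -> T -> Prop) :
  unary_FA_presentable delta -> unary_FA_presentable (sym_closure delta).
Proof.
move=> /unary_FA_presentableE [L [phi [regL phi_surj regE regD]]].
apply/unary_FA_presentableE; exists L, phi; split=> //.
apply: (unary_regular2_ext (unary_regular2_or regD (unary_regular2_transpose regD))) => n m.
by rewrite lift_rel_sym_closure.
Qed.

Lemma unary_FA_presentable_ext (T : Type) (R S : T -> T -> Prop) :
  (forall x y, R x y <-> S x y) -> unary_FA_presentable R -> unary_FA_presentable S.
Proof.
move=> RS [L [phi [regL [phi_surj [regE regR]]]]]; exists L, phi; do 3!split=> //.
by apply: regular_ext regR => w; split=> [[u [v [/RS Ruv ->]]]|[u [v [/RS Suv ->]]]];
  exists u, v.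
Qed.

Theorem theorem6p13 (T : Type) (eta : T -> T -> Prop) :
  is_forest eta ->
  (unary_FA_presentable eta <->
   exists delta : T -> T -> Prop,
     is_directed_forest delta /\ unary_FA_presentable delta /\
     (forall x y, eta x y <-> sym_closure delta x y)).
Proof.
move=> forest_eta; split.
- by move/(unary_FA_presentable_orient forest_eta) => [delta [? ? ?]]; exists delta.
- move=> [delta [_ [pres_delta eta_delta]]].
  apply: unary_FA_presentable_ext (unary_FA_presentable_sym_closure pres_delta) => x y.
  exact: iff_sym (eta_delta x y).
Qed.
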